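(* In a combinatorial auction where all bidders other than $i$ play piecewise constant strategies, every cell $S$ of bidder $i$'s action space has a unique Pareto point, and this Pareto point is a vertex of $S$.
   Context: A combinatorial auction sells goods $M$ to bidders $N$; each bidder $i$ bids a vector $b_i\in\mathbb{R}_{\ge0}^r$ on his $r$ bundles of interest (other bundles bid $0$). An allocation gives each bidder one bundle of interest or $\emptyset$, pairwise disjoint; $X(b)$ is the set of allocations maximizing reported welfare $\sum_i b_i(x_i)$. Bidders' valuations are independent random variables $V_j$ and strategies $s_j$ map valuations to bids; piecewise constant means finitely many values, so $b_{-i}=s_{-i}(V_{-i})$ has finite support. A cell of bidder $i$'s action space $\mathbb{R}_{\ge0}^r$ is a maximal (with respect to inclusion) connected region $S$ such that for every $b_{-i}$ with positive probability there exists an allocation $x$ with $x\in X(b_i,b_{-i})$ for all $b_i\in S$; cells are convex polytopes. A Pareto point of a cell $S$ is a point $b_i\in S$ such that there is no $b_i'\in S$ with $b_i'\le b_i$ coordinatewise and $b_i'\neq b_i$. *)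

From HB Require Import structures.
From mathcomp Require Import all_boot all_order all_algebra.
From mathcomp Require Import all_classical all_reals all_analysis.
Import numFieldTopology.Exports numFieldNormedType.Exports.
Set Implicit Arguments. Unset Strict Implicit. Unset Printing Implicit Defensive.
Import Order.TTheory GRing.Theory Num.Theory.
Local Open Scope ring_scope.
Local Open Scope classical_set_scope.

Section Auction.
Variables (R : realType) (N M : finType) (r : nat).
(* bundles j k : the k-th bundle of interest of bidder j *)
Variable bundles : N -> 'I_r -> {set M}.

(* An allocation gives each bidder the index of one of his bundles of
   interest (Some k) or the empty bundle (None). *)
Definition allocation := {ffun N -> option 'I_r}.

Definition feasible (x : allocation) : Prop :=
  forall j l : N, j != l -> forall a c : 'I_r,
    x j = Some a -> x l = Some c -> (bundles j a :&: bundles l c == finset.set0).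

(* reported value of bidder j's bid vector on his allocated bundle;
   the empty bundle (and any bundle not of interest) is bid 0 *)
Definition bid_value (bj : 'rV[R]_r) (o : option 'I_r) : R :=
  if o is Some k then bj ord0 k else 0.

Definition welfare (b : N -> 'rV[R]_r) (x : allocation) : R :=
  \sum_(j : N) bid_value (b j) (x j).

Definition optimal (b : N -> 'rV[R]_r) (x : allocation) : Prop :=
  feasible x /\ forall y : allocation, feasible y -> welfare b y <= welfare b x.

Definition profile (i : N) (bi : 'rV[R]_r) (bm : N -> 'rV[R]_r) : N -> 'rV[R]_r :=
  fun j => if j == i then bi else bm j.

Definition nonneg_orthant : set 'rV[R]_r := [set b | forall k, 0 <= b ord0 k].

(* supp j : the finite set of bids of bidder j (j <> i) played with positive
   probability; by independence, b_{-i} has positive probability iff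
   b_{-i} j \in supp j for all j <> i. *)
Definition pos_prob (i : N) (supp : N -> seq 'rV[R]_r) (bm : N -> 'rV[R]_r) : Prop :=
  forall j, j != i -> bm j \in supp j.

Definition admissible (i : N) (supp : N -> seq 'rV[R]_r) (S : set 'rV[R]_r) : Prop :=
  forall bm, pos_prob i supp bm ->
    exists x : allocation, forall bi, S bi -> optimal (profile i bi bm) x.

Definition region_ok i supp (S : set 'rV[R]_r) : Prop :=
  S `<=` nonneg_orthant /\ connected S /\ admissible i supp S.

Definition cell (i : N) (supp : N -> seq 'rV[R]_r) (S : set 'rV[R]_r) : Prop :=
  region_ok i supp S /\
  forall T, region_ok i supp T -> S `<=` T -> T = S.

Definition coord_le (q p : 'rV[R]_r) : Prop := forall k, q ord0 k <= p ord0 k.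

Definition pareto_point (S : set 'rV[R]_r) (p : 'rV[R]_r) : Prop :=
  S p /\ ~ (exists q, S q /\ coord_le q p /\ q <> p).

(* vertex = extreme point of the (convex) set S *)
Definition vertex (S : set 'rV[R]_r) (p : 'rV[R]_r) : Prop :=
  S p /\ forall a c : 'rV[R]_r, S a -> S c -> forall t : R, 0 < t < 1 ->
    p = t *: a + (1 - t) *: c -> a = c.

End Auction.

From HB Require Import structures.
From mathcomp Require Import all_boot all_order all_algebra.
From mathcomp Require Import all_classical all_reals all_analysis.
From mathcomp Require Import lra.
Import numFieldTopology.Exports numFieldNormedType.Exports.
Set Implicit Arguments. Unset Strict Implicit. Unset Printing Implicit Defensive.
Import Order.TTheory GRing.Theory Num.Theory.
Local Open Scope ring_scope.
Local Open Scope classical_set_scope.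

(* The coordinatewise infimum p of a cell S belongs to S, so it is the least
   element of S; a least element is the only Pareto point and cannot be a
   proper convex combination of points above it.  To see that p lies in S,
   consider the bids at which every allocation optimal throughout S stays
   optimal.  Welfare is affine in bidder i's bid, so this region is convex,
   hence connected; it is admissible and contains S, so by maximality it is S.
   It contains p: for an allocation x optimal throughout S and a competitor y,
   the inequality W_b(y) <= W_b(x) only gets easier when i's bid on his bundle
   in y is lowered to p, and it involves b otherwise only through b's
   coordinate on i's bundle in x, whose infimum over S is p's coordinate. *)

Lemma star_shaped_connected (R : realType) (V : normedModType R)
    (C : set V) (p : V) :
  C p -> (forall b, C b -> forall t : R, 0 <= t <= 1 -> C (p + t *: (b - p))) ->
  connected C.
Proof.
move=> Cp Cstar.
have -> : C = \bigcup_(b in C) ((fun t : R => p + t *: (b - p)) @` `[0, 1]).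
  apply/seteqP; split => [b Cb|b [c Cc [t t01 <-]]].
    exists b => //; exists 1; first by rewrite /= in_itv /= lexx ler01.
    by rewrite scale1r addrC subrK.
  by apply: Cstar => //; move: t01; rewrite /= in_itv.
apply: bigcup_connected.
  exists p => b Cb; exists 0; first by rewrite /= in_itv /= lexx ler01.
  by rewrite scale0r addr0.
move=> b Cb; apply: connected_continuous_connected; first exact: segment_connected.
apply: continuous_subspaceT => t.
apply: (@continuousD _ _ _ (fun=> p) (fun t : R => t *: (b - p))).
  exact: cst_continuous.
exact: continuousZr_tmp.
Qed.

Section CoordinatewiseOrder.
Variables (R : realType) (r : nat).
Implicit Types (S : set 'rV[R]_r) (p q b : 'rV[R]_r).

Lemma coord_le_anti p q : coord_le p q -> coord_le q p -> p = q.
Proof. by move=> pq qp; apply/rowP => k; apply/eqP; rewrite eq_le pq qp. Qed.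

Definition row_inf S : 'rV[R]_r := \row_k inf [set b ord0 k | b in S].

Lemma row_inf_le S b :
  S `<=` @nonneg_orthant R r -> S b -> coord_le (row_inf S) b.
Proof.
move=> S0 Sb k; rewrite mxE; apply: ge_inf; last by exists b.
by exists 0 => _ [c Sc <-]; exact: S0.
Qed.

Lemma row_inf_glb S k (l : R) :
  S !=set0 -> (forall b, S b -> l <= b ord0 k) -> l <= row_inf S ord0 k.
Proof.
move=> [b Sb] lb; rewrite mxE; apply: lb_le_inf; first by exists (b ord0 k), b.
by move=> _ [c Sc <-]; exact: lb.
Qed.

Lemma row_inf_ge0 S :
  S !=set0 -> S `<=` @nonneg_orthant R r -> nonneg_orthant (row_inf S).
Proof. by move=> S_neq0 S0 k; apply: row_inf_glb => // b /S0. Qed.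

Section LeastElement.
Variables (S : set 'rV[R]_r) (p : 'rV[R]_r).
Hypotheses (Sp : S p) (p_least : forall b, S b -> coord_le p b).

Lemma least_pareto_point : pareto_point S p.
Proof.
split=> // -[q [Sq [qp /eqP]]].
by rewrite (coord_le_anti qp (p_least Sq)) eqxx.
Qed.

Lemma pareto_point_least q : pareto_point S q -> q = p.
Proof.
move=> [Sq q_min]; apply: contrapT => qp; apply: q_min.
by exists p; split; last split; [| exact: p_least | move=> pq; apply: qp].
Qed.

Lemma least_vertex : vertex S p.
Proof.
split=> // a c Sa Sc t /andP[t0 t1] pE.
have coordE k : p ord0 k = t * a ord0 k + (1 - t) * c ord0 k.
  by rewrite pE !mxE.
have ap : coord_le a p.
  by move=> k; have := p_least Sc k; have := coordE k; nra.
have cp : coord_le c p.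
  by move=> k; have := p_least Sa k; have := coordE k; nra.
by rewrite (coord_le_anti ap (p_least Sa)) (coord_le_anti cp (p_least Sc)).
Qed.

End LeastElement.
End CoordinatewiseOrder.

Section Welfare.
Variables (R : realType) (N M : finType) (r : nat).
Variables (bundles : N -> 'I_r -> {set M}) (i : N).
Implicit Types (b c : 'rV[R]_r) (bm : N -> 'rV[R]_r) (x y z : allocation N r).

Definition others_welfare bm z : R :=
  \sum_(j | j != i) bid_value (bm j) (z j).

Lemma welfare_profileE b bm z :
  welfare (profile i b bm) z = others_welfare bm z + bid_value b (z i).
Proof.
rewrite /welfare (bigD1 i) //= /profile eqxx addrC.
by congr (_ + _); apply: eq_bigr => j /negbTE ->.
Qed.

Lemma bid_value_le b c o : coord_le b c -> bid_value b o <= bid_value c o.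
Proof. by case: o => [k|] //= /(_ k). Qed.

Lemma bid_value_lerp b c (t : R) o :
  bid_value (b + t *: (c - b)) o =
  bid_value b o + t * (bid_value c o - bid_value b o).
Proof. by case: o => [k|] /=; rewrite ?mxE ?subrr ?mulr0 ?addr0. Qed.

Lemma optimal_exists (bs : N -> 'rV[R]_r) : exists x, optimal bundles bs x.
Proof.
pose x0 : allocation N r := [ffun=> None].
have fx0 : `[< feasible bundles x0 >].
  by apply/asboolP => j l _ a c; rewrite ffunE.
have [x /asboolP fx x_max] :=
  @arg_maxP _ _ _ x0 (fun x => `[< feasible bundles x >]) (welfare bs) fx0.
by exists x; split => // y fy; exact/x_max/asboolP.
Qed.

Lemma optimal_lerp bm x b c (t : R) : 0 <= t <= 1 ->
  optimal bundles (profile i b bm) x -> optimal bundles (profile i c bm) x ->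
  optimal bundles (profile i (b + t *: (c - b)) bm) x.
Proof.
move=> /andP[t0 t1] [fx bx] [_ cx]; split=> // y fy.
have := bx y fy; have := cx y fy.
rewrite !welfare_profileE !bid_value_lerp; nra.
Qed.

Lemma optimal_row_inf bm x (S : set 'rV[R]_r) :
  S !=set0 -> S `<=` @nonneg_orthant R r ->
  (forall b, S b -> optimal bundles (profile i b bm) x) ->
  optimal bundles (profile i (row_inf S) bm) x.
Proof.
move=> [b0 Sb0] S0 Sx; split=> [|y fy]; first exact: (Sx b0 Sb0).1.
have y_le b : S b ->
    welfare (profile i (row_inf S) bm) y <=
    others_welfare bm x + bid_value b (x i).
  move=> Sb; rewrite -welfare_profileE; apply: le_trans ((Sx b Sb).2 y fy).
  by rewrite !welfare_profileE lerD2l; apply/bid_value_le/row_inf_le.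
rewrite [leRHS]welfare_profileE; case: (x i) y_le => [k|] y_le /=.
- rewrite -lerBlDl; apply: row_inf_glb => [|b Sb]; first by exists b0.
  by rewrite lerBlDl; exact: y_le.
- exact: y_le b0 Sb0.
Qed.

Section Cells.
Variable supp : N -> seq 'rV[R]_r.
Implicit Type S : set 'rV[R]_r.

Lemma region_ok_set1 b : nonneg_orthant b -> region_ok bundles i supp [set b].
Proof.
move=> b0; split; first by move=> _ ->.
split; first exact: connected1.
move=> bm _; have [x xopt] := optimal_exists (profile i b bm).
by exists x => _ ->.
Qed.

Lemma cell_nonempty S : cell bundles i supp S -> S !=set0.
Proof.
move=> [_ S_max]; apply: contrapT => S_empty.
have orthant0 : nonneg_orthant (0 : 'rV[R]_r) by move=> k; rewrite mxE.
have S_eq0 : S = [set 0].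
  apply/esym/(S_max _ (region_ok_set1 orthant0)) => b Sb.
  by exfalso; apply: S_empty; exists b.
by apply: S_empty; exists 0; rewrite S_eq0.
Qed.

Definition optimality_hull S : set 'rV[R]_r :=
  [set b | nonneg_orthant b /\
     forall bm, pos_prob i supp bm -> forall x,
       (forall c, S c -> optimal bundles (profile i c bm) x) ->
       optimal bundles (profile i b bm) x].

Lemma sub_optimality_hull S :
  S `<=` @nonneg_orthant R r -> S `<=` optimality_hull S.
Proof. by move=> S0 b Sb; split; [exact: S0 | move=> bm _ x; apply]. Qed.

Lemma optimality_hull_row_inf S : S !=set0 -> S `<=` @nonneg_orthant R r ->
  optimality_hull S (row_inf S).
Proof.
move=> S_neq0 S0; split; first exact: row_inf_ge0.
by move=> bm _ x; exact: optimal_row_inf.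
Qed.

Lemma optimality_hull_lerp S b c (t : R) : 0 <= t <= 1 ->
  optimality_hull S b -> optimality_hull S c ->
  optimality_hull S (b + t *: (c - b)).
Proof.
move=> /andP[t0 t1] [b0 bx] [c0 cx]; split=> [k|bm bm_pos x Sx].
  by have := b0 k; have := c0 k; rewrite !mxE; nra.
by apply: optimal_lerp; [rewrite t0 | exact: bx | exact: cx].
Qed.

Lemma cell_row_inf S : cell bundles i supp S -> S (row_inf S).
Proof.
move=> cellS; have S_neq0 := cell_nonempty cellS.
move: cellS => [[S0 [_ S_adm]] S_max].
have hull_inf := optimality_hull_row_inf S_neq0 S0.
suff hullE : optimality_hull S = S by move: hull_inf; rewrite hullE.
apply: S_max; last exact: sub_optimality_hull.
split; first by move=> b [].
split.
  apply: (star_shaped_connected hull_inf) => b hull_b t t01.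
  exact: optimality_hull_lerp.
move=> bm bm_pos; have [x Sx] := S_adm bm bm_pos.
by exists x => b [_ hull_b]; exact: hull_b.
Qed.

End Cells.
End Welfare.

Theorem lemma3 (R : realType) (N M : finType) (r : nat)
  (bundles : N -> 'I_r -> {set M}) (i : N) (supp : N -> seq 'rV[R]_r) :
  (forall j, j != i -> supp j != [::]) ->
  (forall j, j != i -> forall b, b \in supp j -> nonneg_orthant b) ->
  forall S : set 'rV[R]_r, cell bundles i supp S ->
    exists p, [/\ pareto_point S p,
                  (forall q, pareto_point S q -> q = p) &
                  vertex S p].
Proof.
move=> _ _ S cellS.
have S_inf := cell_row_inf cellS.
have inf_least b : S b -> coord_le (row_inf S) b.
  by apply: row_inf_le; case: cellS => -[].
exists (row_inf S); split.
- exact: least_pareto_point.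
- exact: pareto_point_least.
- exact: least_vertex.
Qed.
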